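(* Let $\tilde L$ be a minimum-size counterexample. For every $x\in\tilde L\setminus\{0_{\tilde L},1_{\tilde L}\}$, the set $({\parallel}x)=\{y\in\tilde L: y \text{ is incomparable with } x\}$ is not a chain; that is, there exist two elements of $\tilde L$ that are incomparable with each other and each incomparable with $x$.
   Context: For a poset $P$, $x$ upper covers $y$ if $y<x$ with nothing strictly between; join-irreducible: upper covers exactly one element. For $x\in P$, ${\uparrow}x=\{y: x\le y\}$. A chain is a totally ordered subset (the empty set and singletons count as chains). $0_{\tilde L}$, $1_{\tilde L}$ are the least and greatest elements. A counterexample is a finite lattice $L$ with $|L|>1$ in which every join-irreducible $j$ satisfies $|{\uparrow}j|>|L|/2$; a minimum-size counterexample is a counterexample $\tilde L$ such that no counterexample has fewer elements. *)

From HB Require Import structures.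
From mathcomp Require Import all_boot all_order.
Set Implicit Arguments. Unset Strict Implicit. Unset Printing Implicit Defensive.
Import Order.TTheory.
Local Open Scope order_scope.

Definition upper_covers (d : Order.disp_t) (P : finPOrderType d) (x y : P) : bool :=
  (y < x) && [forall z : P, ~~ ((y < z) && (z < x))].

Definition join_irreducible (d : Order.disp_t) (P : finPOrderType d) (j : P) : bool :=
  #|[set y : P | upper_covers j y]| == 1%N.

Definition upset (d : Order.disp_t) (P : finPOrderType d) (x : P) : {set P} :=
  [set y : P | x <= y].

(* counterexample: finite lattice with |L| > 1, each join-irreducible j has
   |up j| > |L|/2, i.e. 2 * |up j| > |L| *)
Definition counterexample (d : Order.disp_t) (L : finLatticeType d) : Prop :=
  (1 < #|L|)%N /\
  forall j : L, join_irreducible j -> (#|L| < 2 * #|upset j|)%N.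

Definition min_counterexample (d : Order.disp_t) (L : finLatticeType d) : Prop :=
  counterexample L /\
  forall (d' : Order.disp_t) (L' : finLatticeType d'),
    (#|L'| < #|L|)%N -> ~ counterexample L'.

(* Fix x distinct from bottom and top, and suppose the set C of elements
   incomparable with x is a chain. The interval [x, top] is a smaller lattice,
   hence not a counterexample: some y join-irreducible there has
   2 |up y| <= |up x|; y is not join-irreducible in L, and a second lower cover
   of y yields c in C with c `|` x = y. On the other hand the minimum of C is
   join-irreducible; let j be a maximal join-irreducible element of C. Every e
   in C above j has a lower cover below x, and distinct such e have distinct
   ones, none equal to j `&` x; and every common upper bound of x and j bounds
   all of C, so up j is covered by {j}, the elements of C above j, and
   up (c `|` x). Counting then gives 2 |up j| <= |L|, contradicting the
   counterexample property of L. *)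

From HB Require Import structures.
From mathcomp Require Import all_boot all_order.
From mathcomp Require Import zify.
Import Order.TTheory.
Local Open Scope order_scope.
Set Implicit Arguments. Unset Strict Implicit. Unset Printing Implicit Defensive.

Section FinPOrder.
Variables (d : Order.disp_t) (P : finPOrderType d).
Implicit Types a b m w z : P.

Definition downset a : {set P} := [set e | e <= a].

Lemma card_downset_lt a b :
  a < b -> (#|downset a| < #|downset b|)%N.
Proof.
move=> ab; apply: proper_card; apply/properP; split.
- by apply/subsetP => e; rewrite !inE => /le_trans; apply; exact: ltW.
- by exists b; rewrite !inE ?lexx // lt_geF.
Qed.

Lemma ex_minimal (p : pred P) a :
  p a -> exists2 m, p m & forall z, p z -> ~~ (z < m).
Proof.
move=> pa; case: (arg_minnP (fun z => #|downset z|) pa) => m pm minm.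
exists m => // z /minm; apply: contraL => /card_downset_lt; by rewrite ltnNge.
Qed.

Lemma ex_maximal (p : pred P) a :
  p a -> exists2 m, p m & forall z, p z -> ~~ (m < z).
Proof.
move=> pa; case: (arg_maxnP (fun z => #|downset z|) pa) => m pm maxm.
exists m => // z /maxm; apply: contraL => /card_downset_lt; by rewrite ltnNge.
Qed.

Lemma incompE a b : (a >< b) = ~~ (a <= b) && ~~ (b <= a).
Proof. by rewrite /Order.comparable negb_or. Qed.

Lemma upper_covers_lt b z : upper_covers b z -> z < b.
Proof. by case/andP. Qed.

Lemma upper_coversNbetween b z w : upper_covers b z -> z < w -> w < b -> False.
Proof. by case/andP=> _ /forallP /(_ w); rewrite negb_and => /orP[] /negP. Qed.

Lemma ex_upper_covers a b : a < b -> exists2 z, a <= z & upper_covers b z.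
Proof.
move=> ab; have pa : [pred z | (a <= z) && (z < b)] a by rewrite /= lexx.
have [z /andP[az zb] maxz] := ex_maximal pa.
exists z => //; rewrite /upper_covers zb; apply/forallP => w; apply/negP => /andP[zw wb].
by have := maxz w; rewrite /= wb (le_trans az (ltW zw)) zw => /(_ isT).
Qed.

Lemma upper_covers_incomp b z1 z2 :
  upper_covers b z1 -> upper_covers b z2 -> z1 != z2 -> z1 >< z2.
Proof.
move=> c1 c2 ne; rewrite incompE.
apply/andP; split; apply/negP; rewrite le_eqVlt => /orP[/eqP e|lt].
- by rewrite e eqxx in ne.
- exact: upper_coversNbetween c1 lt (upper_covers_lt c2).
- by rewrite e eqxx in ne.
- exact: upper_coversNbetween c2 lt (upper_covers_lt c1).
Qed.

Lemma join_irreducibleP j :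
  reflect (exists2 z, upper_covers j z & forall z', upper_covers j z' -> z' = z)
          (join_irreducible j).
Proof.
apply: (iffP cards1P) => [[z hz]|[z jz uniq]].
- exists z; first by have := set11 z; rewrite -hz inE.
  by move=> z' jz'; apply/set1P; rewrite -hz inE.
- by exists z; apply/setP => w; rewrite !inE; apply/idP/eqP => [/uniq|->].
Qed.

Lemma ex_other_upper_covers e z :
  ~~ join_irreducible e -> upper_covers e z -> exists2 z', upper_covers e z' & z' != z.
Proof.
move=> nj ez; have [/existsP[z' /andP[]] | ] := boolP [exists z', upper_covers e z' && (z' != z)].
  by exists z'.
rewrite negb_exists => /forallP uniq; case/join_irreducibleP: nj.
by exists z => // z' ez'; apply/eqP; move: (uniq z'); rewrite ez' negbK.
Qed.
End FinPOrder.

Section FinLattice.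
Variables (d : Order.disp_t) (L : finLatticeType d).
Implicit Types a b c e j u w x z : L.

Lemma upper_covers_join_eq b z a :
  upper_covers b z -> a <= b -> ~~ (a <= z) -> z `|` a = b.
Proof.
move=> bz ab naz; apply/eqP; rewrite eq_le leUx ab (ltW (upper_covers_lt bz)) /=.
apply/negPn/negP => nb; apply: (upper_coversNbetween bz (w := z `|` a)).
- by rewrite lt_neqAle leUl andbT; apply: contraNneq naz => ->; rewrite leUr.
- by rewrite lt_leAnge nb leUx ab (ltW (upper_covers_lt bz)).
Qed.

Lemma upper_covers_join b z1 z2 :
  upper_covers b z1 -> upper_covers b z2 -> z1 != z2 -> z1 `|` z2 = b.
Proof.
move=> c1 c2 /(upper_covers_incomp c1 c2); rewrite incompE => /andP[_ n21].
exact: upper_covers_join_eq c1 (ltW (upper_covers_lt c2)) n21.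
Qed.

Lemma incomp_le_comp_lt x e z : e >< x -> z <= e -> z >=< x -> z < x.
Proof.
rewrite incompE => /andP[nex nxe] ze /orP[zx|xz]; last by rewrite (le_trans xz ze) in nxe.
by rewrite lt_neqAle zx andbT; apply: contraNneq nxe => <-.
Qed.

Lemma incomp_between x a b w : a >< x -> b >< x -> a <= w -> w <= b -> w >< x.
Proof.
rewrite !incompE => /andP[nax _] /andP[_ nxb] aw wb.
apply/andP; split; first by apply: contra nax; exact: le_trans.
by apply: contra nxb => /le_trans; apply.
Qed.

Lemma incomp_meet_lt x c : c >< x -> c `&` x < c.
Proof.
rewrite incompE => /andP[ncx _]; rewrite lt_neqAle leIl andbT.
by apply: contraNneq ncx => <-; rewrite leIr.
Qed.

Lemma minimal_incomp_join_irreducible x c :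
  c >< x -> (forall z, z >< x -> ~~ (z < c)) -> join_irreducible c.
Proof.
move=> cx minc; have [z0 _ cz0] := ex_upper_covers (incomp_meet_lt cx).
have below z : upper_covers c z -> z < x.
  move=> cz; apply: incomp_le_comp_lt cx (ltW (upper_covers_lt cz)) _.
  by apply/negPn/negP => zx; have := minc z zx; rewrite upper_covers_lt.
apply/join_irreducibleP; exists z0 => // z cz; apply/eqP/negPn/negP => ne.
move: cx; rewrite incompE -(upper_covers_join cz cz0 ne) leUx.
by rewrite (ltW (below _ cz)) (ltW (below _ cz0)).
Qed.

Lemma card_below_incomp_upset x :
  (#|[set e | (e < x)%O]| + #|[set e | e >< x]| + #|upset x| <= #|L|)%N.
Proof.
set D := [set e | e < x]; set C := [set e | e >< x].
have DC : D :&: C = set0.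
  by apply/setP => e; rewrite !inE incompE; case: (boolP (e < x)) => // /ltW ->.
have DCU : (D :|: C) :&: upset x = set0.
  apply/setP => e; rewrite !inE incompE; case: (boolP (x <= e)) => xe; last by rewrite andbF.
  by rewrite (le_gtF xe) andbF.
have := subset_leq_card (subsetT (D :|: C :|: upset x)).
by rewrite cardsT !cardsU DC DCU !cards0 !subn0.
Qed.
End FinLattice.

Section IncompChain.
Variables (d : Order.disp_t) (L : finLatticeType d) (x : L).
Implicit Types a b c e j u w z : L.
Hypothesis incomp_chain : forall a b, a >< x -> b >< x -> a >=< b.

Lemma ex_upper_covers_below e :
  e >< x -> ~~ join_irreducible e -> exists2 z, z < x & upper_covers e z.
Proof.
move=> ex nje; have [z1 _ ez1] := ex_upper_covers (incomp_meet_lt ex).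
have lt_of_comp z : upper_covers e z -> z >=< x -> z < x.
  by move=> ez; apply: incomp_le_comp_lt ex (ltW (upper_covers_lt ez)).
have [z1x|z1x] := boolP (z1 >=< x); first by exists z1; rewrite ?lt_of_comp.
have [z2 ez2 ne] := ex_other_upper_covers nje ez1.
have [z2x|z2x] := boolP (z2 >=< x); first by exists z2; rewrite ?lt_of_comp.
by have := upper_covers_incomp ez2 ez1 ne; rewrite incomp_chain.
Qed.

Section AboveMaximalJoinIrreducible.
Variable j : L.
Hypotheses (jx : j >< x) (jmax : forall e, e >< x -> j < e -> ~~ join_irreducible e).

Lemma incomp_le_upper u c : x <= u -> j <= u -> c >< x -> c <= u.
Proof.
move=> xu ju cx; apply/negPn/negP => ncu.
(* A minimal m in C not below u is the join of two lower covers, one below x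
   and one the largest element of C below m; both lie below u. *)
have pc : [pred z | (z >< x) && ~~ (z <= u)] c by rewrite /= cx ncu.
have [m /andP[mx nmu] minm] := ex_minimal pc.
have jm : j < m.
  have /orP[jm|mj] := incomp_chain jx mx; last by rewrite (le_trans mj ju) in nmu.
  by rewrite lt_neqAle jm andbT; apply: contraNneq nmu => <-.
have [z zx mz] := ex_upper_covers_below mx (jmax mx jm).
have pj : [pred w | (w >< x) && (w < m)] j by rewrite /= jx jm.
have [p /andP[px pm] maxp] := ex_maximal pj.
have pu : p <= u.
  by apply/negPn/negP => npu; have := minm p; rewrite /= px npu pm => /(_ isT).
have mp : upper_covers m p.
  rewrite /upper_covers pm; apply/forallP => w; apply/negP => /andP[pw wm].
  have wx := incomp_between px mx (ltW pw) (ltW wm).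
  by have := maxp w; rewrite /= wx wm pw => /(_ isT).
have pz : p != z by apply: contraTneq px => ->; rewrite incompE (ltW zx).
by move: nmu; rewrite -(upper_covers_join mp mz pz) leUx pu (le_trans (ltW zx) xu).
Qed.

Let above := [set e | (e >< x) && (j < e)].

Lemma card_upset_le c :
  c >< x -> (#|upset j| <= 1 + #|above| + #|upset (c `|` x)|)%N.
Proof.
move=> cx; have sub : upset j \subset [set j] :|: above :|: upset (c `|` x).
  apply/subsetP => e; rewrite !inE le_eqVlt => /orP[/eqP ->|je]; first by rewrite eqxx.
  rewrite je andbT; have [ex|ex] := boolP (e >< x); first by rewrite orbT.
  have xe : x <= e.
    move: ex; rewrite negbK => /orP[ex|//].
    by move: jx; rewrite incompE (le_trans (ltW je) ex).
  by rewrite leUx (incomp_le_upper xe (ltW je) cx) xe !orbT.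
apply: leq_trans (subset_leq_card sub) _.
rewrite -(cards1 j); apply: leq_trans (leq_card_setU _ _) _.
by rewrite leq_add2r leq_card_setU.
Qed.

Lemma card_above_lt_incomp : (#|above| < #|[set e | e >< x]|)%N.
Proof.
apply: proper_card; apply/properP; split.
  by apply/subsetP => e; rewrite !inE => /andP[].
by exists j; rewrite !inE ?jx // ltxx andbF.
Qed.

Let cover_below e := odflt j [pick z | (z < x) && upper_covers e z].

Lemma cover_below_spec e :
  e \in above -> (cover_below e < x) && upper_covers e (cover_below e).
Proof.
rewrite inE => /andP[ex je]; rewrite /cover_below; case: pickP => [z -> //|none].
have [z zx ez] := ex_upper_covers_below ex (jmax ex je).
by have := none z; rewrite zx ez.
Qed.

Lemma cover_below_inj : {in above &, injective cover_below}.
Proof.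
have cover_below_neq e1 e2 :
    e1 \in above -> e2 \in above -> e1 < e2 -> cover_below e1 != cover_below e2.
  move=> ae1 ae2 e12; apply/eqP => eq.
  have /andP[_ c1] := cover_below_spec ae1; have /andP[_ c2] := cover_below_spec ae2.
  by apply: (upper_coversNbetween c2 _ e12); rewrite -eq (upper_covers_lt c1).
move=> e1 e2 ae1 ae2 eq; apply/eqP/negPn/negP => ne.
have := ae1; rewrite inE => /andP[e1x _]; have := ae2; rewrite inE => /andP[e2x _].
have /orP[l|l] := incomp_chain e1x e2x.
- by have := cover_below_neq _ _ ae1 ae2; rewrite lt_neqAle ne l eq eqxx => /(_ isT).
- by have := cover_below_neq _ _ ae2 ae1; rewrite lt_neqAle eq_sym ne l eq eqxx => /(_ isT).
Qed.

Lemma card_above_lt_below : (#|above| < #|[set e | (e < x)%O]|)%N.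
Proof.
have jxx : j `&` x < x by rewrite meetC incomp_meet_lt // comparable_sym.
have sub : cover_below @: above \subset [set e | e < x] :\ (j `&` x).
  apply/subsetP => _ /imsetP[e ae ->]; have /andP[lx el] := cover_below_spec ae.
  rewrite !inE lx andbT; apply: contraTneq el => ->.
  have := ae; rewrite inE => /andP[_ je].
  by apply/negP => ejx; apply: (upper_coversNbetween ejx (incomp_meet_lt jx) je).
have := subset_leq_card sub; rewrite card_in_imset; last exact: cover_below_inj.
by rewrite [#|[set e | e < x]|](cardsD1 (j `&` x)) inE jxx.
Qed.
End AboveMaximalJoinIrreducible.

Lemma chain_incomp_upset_bound c : c >< x ->
  exists2 j : L, join_irreducible j &
    (2 * #|upset j| + #|upset x| <= #|L| + 2 * #|upset (c `|` x)|)%N.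
Proof.
move=> cx; have [c0 /= c0x minc0] := @ex_minimal _ _ [pred z | z >< x] c cx.
have pc0 : [pred z | (z >< x) && join_irreducible z] c0.
  by rewrite /= c0x (minimal_incomp_join_irreducible c0x minc0).
have [j /andP[jx jj] maxj] := ex_maximal pc0; exists j => //.
have jmax e : e >< x -> j < e -> ~~ join_irreducible e.
  by move=> ex je; apply/negP => ej; have := maxj e; rewrite /= ex ej je => /(_ isT).
(* With k the number of elements of C above j: |up j| <= 1 + k + |up (c `|` x)|
   and 2 (k + 1) <= |C| + |{z | z < x}| <= |L| - |up x|. *)
have := card_upset_le jx jmax cx; have := card_above_lt_incomp jx.
have := card_above_lt_below jx jmax; have := card_below_incomp_upset x.
move: #|upset j| #|upset x| #|upset (c `|` x)| #|L| #|[set e | e >< x]|.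
move: #|[set e | (e < x)%O]| #|[set e | e >< x & (j < e)%O]|.
move=> nbelow nabove nj nx ncx n nincomp; lia.
Qed.
End IncompChain.

Section UpInterval.
Variables (d : Order.disp_t) (L : finLatticeType d) (x : L).

Definition up_interval := {y : L | x <= y}.
HB.instance Definition _ := [isSub of up_interval for (@sval L (fun y => x <= y))].
HB.instance Definition _ := [Finite of up_interval by <:].

Lemma up_interval_meet_closed : meet_closed (fun y : L => x <= y).
Proof. by move=> a b; rewrite !unfold_in /= => xa xb; rewrite lexI xa xb. Qed.

Lemma up_interval_join_closed : join_closed (fun y : L => x <= y).
Proof. by move=> a b; rewrite !unfold_in /= => xa _; exact: le_trans xa (leUl a b). Qed.

HB.instance Definition _ := Order.SubChoice_isSubLattice.Build d L (fun y => x <= y)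
  d up_interval up_interval_meet_closed up_interval_join_closed.

Lemma up_interval_le (a b : up_interval) : (a <= b) = (val a <= val b).
Proof. exact: Order.le_val. Qed.

Lemma up_interval_lt (a b : up_interval) : (a < b) = (val a < val b).
Proof. exact: Order.SubPreorderTheory.lt_val. Qed.

Lemma up_interval_upper_covers (a b : up_interval) :
  upper_covers a b = upper_covers (val a) (val b).
Proof.
rewrite /upper_covers up_interval_lt; case: (val b < val a) => //=.
apply/forallP/forallP => [between w | between w]; last by rewrite !up_interval_lt.
apply/negP => /andP[bw wa]; have xw : x <= w := le_trans (valP b) (ltW bw).
by have := between (Sub w xw); rewrite !up_interval_lt SubK bw wa.
Qed.

Lemma card_up_interval : #|{: up_interval}| = #|upset x|.
Proof. by rewrite cardsE card_sig. Qed.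

Lemma card_up_interval_upset (a : up_interval) : #|upset a| = #|upset (val a)|.
Proof.
have -> : upset (val a) = val @: upset a.
  apply/setP => w; rewrite inE; apply/idP/imsetP => [aw | [v]]; last first.
    by rewrite inE up_interval_le => av ->.
  by exists (Sub w (le_trans (valP a) aw)); rewrite ?inE ?up_interval_le SubK.
by rewrite card_imset //; exact: val_inj.
Qed.

Lemma up_interval_join_irreducible_join (y : up_interval) :
  join_irreducible y -> ~~ join_irreducible (val y) ->
  exists2 c, c >< x & c `|` x = val y.
Proof.
case/join_irreducibleP => z0 yz0 uniq nj.
have yz0L : upper_covers (val y) (val z0) by rewrite -up_interval_upper_covers.
have [c yc cz0] := ex_other_upper_covers nj yz0L.
have nxc : ~~ (x <= c).
  apply: contra cz0 => xc; have ycI : upper_covers y (Sub c xc : up_interval).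
    by rewrite up_interval_upper_covers SubK.
  by rewrite -(uniq _ ycI) SubK.
have xy : x < val y := le_lt_trans (valP z0) (upper_covers_lt yz0L).
exists c; last exact: upper_covers_join_eq yc (ltW xy) nxc.
rewrite incompE nxc andbT; apply/negP; rewrite le_eqVlt => /orP[/eqP cx|cx].
  by rewrite cx lexx in nxc.
exact: upper_coversNbetween yc cx xy.
Qed.
End UpInterval.

Lemma incomp_pair_or_chain (d : Order.disp_t) (P : finPOrderType d) (x : P) :
  (exists y z : P, [/\ y >< x, z >< x & y >< z]) \/
  (forall a b : P, a >< x -> b >< x -> a >=< b).
Proof.
have [/existsP[y /existsP[z /and3P[yx zx yz]]]|none] :=
  boolP [exists y : P, exists z : P, [&& y >< x, z >< x & y >< z]].
  by left; exists y, z.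
right => a b ax bx; apply/negPn/negP => ab; case/negP: none.
by apply/existsP; exists a; apply/existsP; exists b; rewrite ax bx ab.
Qed.

Lemma not_counterexample_join_irreducible (d : Order.disp_t) (T : finLatticeType d) :
  (1 < #|T|)%N -> ~ counterexample T ->
  exists2 y : T, join_irreducible y & (2 * #|upset y| <= #|T|)%N.
Proof.
move=> gt1 notT.
have [/existsP[y /andP[yj ysmall]]|none] :=
  boolP [exists y : T, join_irreducible y && (2 * #|upset y| <= #|T|)%N].
  by exists y.
case: notT; split => // y yj; rewrite ltnNge.
by apply: contra none => ysmall; apply/existsP; exists y; rewrite yj.
Qed.

Lemma min_counterexample_incomp_join (d : Order.disp_t) (L : finTBLatticeType d) (x : L) :
  min_counterexample L -> x != \bot -> x != \top ->
  exists2 c, c >< x & (2 * #|upset (c `|` x)| <= #|upset x|)%N.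
Proof.
case=> [[_ Lbad] Lmin] x0 x1.
have ltL : (#|{: up_interval x}| < #|L|)%N.
  rewrite card_up_interval -cardsT; apply: proper_card; apply/properP; split.
    exact: subsetT.
  by exists \bot; rewrite !inE // lex0.
have gt1 : (1 < #|{: up_interval x}|)%N.
  rewrite card_up_interval; apply: leq_trans (_ : #|[set x; \top]| <= _)%N.
    by rewrite cards2 x1.
  by apply/subset_leq_card/subsetP => w; rewrite !inE => /orP[]/eqP->.
have [y yj ysmall] := not_counterexample_join_irreducible gt1 (Lmin _ _ ltL).
have nyj : ~~ join_irreducible (val y).
  apply/negP => /Lbad; rewrite -card_up_interval_upset => Lsmall.
  by have := leq_trans Lsmall (leq_trans ysmall (ltnW ltL)); rewrite ltnn.
have [c cx cxy] := up_interval_join_irreducible_join yj nyj.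
by exists c => //; rewrite cxy -card_up_interval_upset -(card_up_interval x).
Qed.

Theorem theorem2p13 (d : Order.disp_t) (L : finTBLatticeType d) :
  min_counterexample L ->
  forall x : L, x != \bot -> x != \top ->
    exists y z : L, [/\ y >< x, z >< x & y >< z].
Proof.
move=> Lmin x x0 x1; have [c cx csmall] := min_counterexample_incomp_join Lmin x0 x1.
have [//|incomp_chain] := incomp_pair_or_chain x.
have [j jj jbound] := chain_incomp_upset_bound incomp_chain cx.
have [[_ Lbad] _] := Lmin; have := Lbad j jj; move: jbound csmall.
move: #|upset j| #|upset x| #|upset (c `|` x)| #|L| => a u b n; lia.
Qed.
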